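(* Fix any $\epsilon>0$. There exists a measurable set $S_\epsilon\subset\mathbb{T}^2$ with $\mu(S_\epsilon)\ge 9/32-\epsilon$ such that the following holds. For any $\theta,\alpha\in\mathbb{T}^2$ with $\{\theta,\theta+\alpha,\theta+2\alpha\}\subset S_\epsilon$, either \[2\psi(\theta+\alpha)\ge \psi(\theta)+\psi(\theta+2\alpha)+1/2,\] or otherwise, writing $d:=\frac{\pi^{-1}(\theta+2\alpha)-\pi^{-1}(\theta)}{2}\in\mathbb{R}^2$ (so that $\psi(\theta+2\alpha)=\psi(\theta)+2(d_1+d_2)$), we have \[\psi(\theta+\alpha)=\psi(\theta)+(d_1+d_2),\] and furthermore, if $|d_1+d_2|\le \frac{\epsilon}{1000}$, then \[(1-\{p(\theta)\})^2+(1-\{p(\theta+2\alpha)\})^2-2(1-\{p(\theta+\alpha)\})^2\ge d_1^2.\]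
   Context: $\mathbb{T}^2:=(\mathbb{R}/\mathbb{Z})^2$ with normalized Haar (Lebesgue) measure $\mu$. $\pi:\mathbb{R}^2\to\mathbb{T}^2$, $x\mapsto x+\mathbb{Z}^2$, and for $\theta\in\mathbb{T}^2$, $\pi^{-1}(\theta)$ denotes the unique $x\in[0,1)^2$ with $\pi(x)=\theta$. The sum map $\psi:\mathbb{T}^2\to[0,2)$ is $\psi(\theta)=\pi^{-1}(\theta)_1+\pi^{-1}(\theta)_2$. The projection $p:\mathbb{T}^2\to[0,1)$ is $p(\theta)=\pi^{-1}(\theta)_1$. For $x\in[0,1)$, $\{x\}:=x$ if $x\in[0,1/2)$ and $\{x\}:=x-1/2$ otherwise (this is not the usual fractional part). *)

From HB Require Import structures.
From mathcomp Require Import all_boot all_order all_algebra.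
From mathcomp Require Import all_classical all_reals all_analysis.
Set Implicit Arguments. Unset Strict Implicit. Unset Printing Implicit Defensive.
Import Order.TTheory GRing.Theory Num.Theory.
Local Open Scope classical_set_scope.
Local Open Scope ring_scope.

(* The torus T^2 = (R/Z)^2 is represented by points of R^2; a point x : R*R
   stands for its class pi(x).  [tor x] is the unique representative of pi(x)
   in [0,1)^2, i.e. pi^{-1}(pi(x)). *)
Definition frac {R : realType} (x : R) : R := x - (Num.floor x)%:~R.

Definition tor {R : realType} (x : R * R) : R * R := (frac x.1, frac x.2).

Definition unit_sq {R : realType} : set (R * R) :=
  [set x | 0 <= x.1 < 1 /\ 0 <= x.2 < 1].

Definition tadd {R : realType} (x y : R * R) : R * R := (x.1 + y.1, x.2 + y.2).
Definition tscale {R : realType} (n : nat) (x : R * R) : R * R := (x.1 *+ n, x.2 *+ n).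

Definition psi {R : realType} (t : R * R) : R := (tor t).1 + (tor t).2.
Definition proj1T {R : realType} (t : R * R) : R := (tor t).1.

(* the non-standard {x} on [0,1) *)
Definition brace {R : realType} (x : R) : R := if x < 1/2 then x else x - 1/2.

(* normalized Haar measure on T^2 = Lebesgue measure on [0,1)^2 *)
Definition mu2 {R : realType} : set (R * R) -> \bar R :=
  (@lebesgue_measure R \x @lebesgue_measure R)%E.

(* S is the union of the square [1/2,3/4) x [1/4,3/4), the band
   {3/4 <= x < 1, 1 <= x + y < 3/2} (each of area 1/8) and the corner triangle
   {0 <= x, 3/4 <= y, x + y < 1 - delta} of area (1/4 - delta)^2/2 >= 1/32 - delta/4.
   Along a progression theta, theta + alpha, theta + 2 alpha in S, the second
   differences k1, k2 of the two coordinates of the representatives are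
   integers in {-1,0,1}, and psi0 + psi2 - 2 psi1 = k1 + k2.  A case analysis
   over the three pieces gives k1 + k2 <= 0.  If k1 + k2 = 0 and
   |psi2 - psi0| <= delta, the first coordinates x0, x2 of the endpoints lie on
   the same side of 1/2; as {x} is x mod 1/2 on [0,1), the second difference
   of {x} then vanishes, and the quadratic form in the statement collapses to
   (x2 - x0)^2/2 = 2 d1^2 >= d1^2. *)
From Pilot Require Import Defs.
From HB Require Import structures.
From mathcomp Require Import all_boot all_order all_algebra.
From mathcomp Require Import all_classical all_reals all_analysis.
From mathcomp Require Import measurable_realfun ring lra zify.
Import Order.TTheory GRing.Theory Num.Theory numFieldNormedType.Exports.
Set Implicit Arguments. Unset Strict Implicit. Unset Printing Implicit Defensive.
Local Open Scope classical_set_scope.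
Local Open Scope ring_scope.

Section second_differences.
Variable R : realType.

Lemma frac_itv (x : R) : 0 <= Defs.frac x < 1.
Proof.
rewrite /Defs.frac subr_ge0 floor_le /= ltrBlDl.
by rewrite (lt_le_trans (floorD1_gt x)) // rmorphD.
Qed.

Lemma frac_second_diff (t a : R) :
  Defs.frac t + Defs.frac (t + a *+ 2) - 2 * Defs.frac (t + a) \in [:: -1; 0; 1].
Proof.
pose z := 2 * Num.floor (t + a) - Num.floor t - Num.floor (t + a *+ 2).
have zE : Defs.frac t + Defs.frac (t + a *+ 2) - 2 * Defs.frac (t + a) = z%:~R.
  by rewrite /Defs.frac /z !rmorphB /= rmorphM /= !mulr2n; lra.
have := frac_itv t; have := frac_itv (t + a); have := frac_itv (t + a *+ 2).
move=> /andP[? ?] /andP[? ?] /andP[? ?].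
have zlo : -2 < z by rewrite -(ltr_int R) rmorphN /= -zE; lra.
have zhi : z < 2 by rewrite -(ltr_int R) -zE; lra.
rewrite zE; have [->|[->|->]] : z = -1 \/ z = 0 \/ z = 1 by lia.
all: by rewrite !inE /= eqxx ?orbT.
Qed.

(* On [0,1), [brace] is reduction mod 1/2. *)
Lemma brace_second_diff (a0 a1 a2 : R) :
  0 <= a0 < 1 -> 0 <= a1 < 1 -> 0 <= a2 < 1 -> (a0 < 1/2) = (a2 < 1/2) ->
  a0 + a2 - 2 * a1 \in [:: -1; 0; 1] ->
  brace a0 + brace a2 = 2 * brace a1.
Proof.
move=> /andP[? ?] /andP[? ?] /andP[? ?] side.
rewrite !inE => /or3P[] /eqP k.
all: rewrite /brace -side; case: ifP => ?; case: ifP => ?; lra.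
Qed.

Lemma brace_diff_same_side (a0 a2 : R) : (a0 < 1/2) = (a2 < 1/2) ->
  brace a2 - brace a0 = a2 - a0.
Proof. by rewrite /brace => <-; case: ifP => _; lra. Qed.

Lemma second_diff_sq (v0 v1 v2 : R) : v0 + v2 = 2 * v1 ->
  (1 - v0) ^+ 2 + (1 - v2) ^+ 2 - 2 * (1 - v1) ^+ 2 = (v2 - v0) ^+ 2 / 2.
Proof. by move=> e; rewrite (_ : v1 = (v0 + v2) / 2); [field | lra]. Qed.

Lemma sum_unit_cases (x y : R) :
  x \in [:: -1; 0; 1] -> y \in [:: -1; 0; 1] ->
  (x = 1 -> y < 0) -> (y = 1 -> x < 0) -> x + y = 0 \/ x + y <= -1.
Proof.
rewrite !inE => /or3P[] /eqP-> /or3P[] /eqP-> hx hy; first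
  [by left; lra | by right; lra | by have := hx erefl; lra | by have := hy erefl; lra].
Qed.

End second_differences.

Section strip.
Variable R : realType.
Implicit Types (a b : R) (f g : R -> R).

Definition strip a b f g : set (R * R) :=
  [set p | (a <= p.1 < b) && (f p.1 <= p.2 < g p.1)].

Lemma xsection_strip a b f g x :
  xsection (strip a b f g) x = if a <= x < b then `[f x, g x[%classic else set0.
Proof.
apply/seteqP; split => y; rewrite /xsection /strip /= inE /= ?in_itv /=.
  by case/andP => -> /=; rewrite in_itv.
by case: ifP => // -> /=; rewrite in_itv.
Qed.

Lemma measurable_strip a b f g : measurable_fun setT f -> measurable_fun setT g ->
  measurable (strip a b f g).
Proof.
move=> mf mg.
have mf1 : measurable_fun [set: R * R] (f \o fst) by exact: measurableT_comp.
have mg1 : measurable_fun [set: R * R] (g \o fst) by exact: measurableT_comp.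
have : measurable_fun [set: R * R] (fun p => (a <= p.1 < b) && (f p.1 <= p.2 < g p.1)).
  apply: measurable_and; apply: measurable_and.
  - by apply: measurable_fun_ler => //; exact: measurable_fst.
  - by apply: measurable_fun_ltr => //; exact: measurable_fst.
  - by apply: measurable_fun_ler => //; exact: measurable_snd.
  - by apply: measurable_fun_ltr => //; exact: measurable_snd.
by move=> /(_ measurableT [set true] I); rewrite setTI.
Qed.

Lemma mu2_strip a b f g : {in `[a, b[, forall x, f x <= g x} ->
  mu2 (strip a b f g) = (\int[lebesgue_measure]_(x in `[a, b[) (g x - f x)%:E)%E.
Proof.
move=> fg; rewrite /mu2 /product_measure1 /= [RHS]integral_mkcond.
apply: eq_integral => x _ /=; rewrite xsection_strip patchE mem_setE in_itv /=.
case: ifPn => [xab|_]; last exact: measure0.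
rewrite lebesgue_measure_itv /= lte_fin -EFinD; case: ltP => // gf.
by have := fg x; rewrite in_itv /= xab => /(_ isT) fg'; congr (_%:E); lra.
Qed.

Lemma mu2U (A B : set (R * R)) : measurable A -> measurable B -> A `&` B = set0 ->
  mu2 (A `|` B) = (mu2 A + mu2 B)%E.
Proof. exact: (measureU (lebesgue_measure \x lebesgue_measure)%E). Qed.

Lemma mu2_parallelogram a b f g (h : R) : a <= b -> 0 <= h ->
  (forall x, g x - f x = h) -> mu2 (strip a b f g) = (h * (b - a))%:E.
Proof.
move=> ab h0 gfh; rewrite mu2_strip; last by move=> x _; rewrite -subr_ge0 gfh.
under eq_integral do rewrite gfh.
rewrite integral_cst //= lebesgue_measure_itv /= lte_fin -EFinD.
case: ltP => ba; first by rewrite -EFinM.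
by rewrite (_ : b - a = 0) ?mulr0 ?mule0 //; lra.
Qed.

Lemma integral_itv0_sub (c : R) : 0 < c ->
  (\int[lebesgue_measure]_(x in `[0%R, c[) (c - x)%:E = (c ^+ 2 / 2)%:E)%E.
Proof.
move=> c0.
have cont : continuous (fun x : R => c - x).
  by move=> x; apply: continuousB; [exact: cst_continuous | exact: cvg_id].
rewrite integral_itv_bndo_bndc; last first.
  by apply/measurable_EFinP; apply: measurable_funB => //; exact: measurable_id.
pose F : {poly R} := c *: 'X - 2^-1 *: 'X^2.
have FE x : F.[x] = c * x - x ^+ 2 / 2 by rewrite /F !hornerE /=; lra.
rewrite (@continuous_FTC2 _ _ (horner F) 0 c c0).
- by rewrite !FE; congr (_%:E); lra.
- exact: continuous_subspaceT.
- split.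
  + by move=> x _; exact: derivable_horner.
  + by apply: cvg_at_right_filter; exact: continuous_horner.
  + by apply: cvg_at_left_filter; exact: continuous_horner.
- move=> x _; rewrite derive1E derive_val /F.
  by rewrite derivB !derivZ derivX derivXn !hornerE /=; lra.
Qed.

Lemma mu2_triangle (c y : R) : 0 < c ->
  mu2 (strip 0 c (fun=> y) (fun x => y + c - x)) = (c ^+ 2 / 2)%:E.
Proof.
move=> c0; rewrite mu2_strip; last by move=> x; rewrite in_itv /= => /andP[_ xc]; lra.
rewrite -(@integral_itv0_sub c c0); apply: eq_integral => x _; congr (_%:E); lra.
Qed.

End strip.

Section good_set.
Variable R : realType.
Implicit Types (delta a b : R).

Definition square : set (R * R) := strip (1/2) (3/4) (fun=> 1/4) (fun=> 3/4).
Definition band : set (R * R) := strip (3/4) 1 (fun x => 1 - x) (fun x => 3/2 - x).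
Definition corner delta : set (R * R) :=
  strip 0 (1/4 - delta) (fun=> 3/4) (fun x => 3/4 + (1/4 - delta) - x).
Definition Sset delta : set (R * R) := square `|` band `|` corner delta.

Lemma measurable_square : measurable square.
Proof. exact: measurable_strip. Qed.

Lemma measurable_band : measurable band.
Proof. by apply: measurable_strip; apply: measurable_funB => //; exact: measurable_id. Qed.

Lemma measurable_corner delta : measurable (corner delta).
Proof. by apply: measurable_strip => //; apply: measurable_funB => //; exact: measurable_id. Qed.

Lemma measurable_Sset delta : measurable (Sset delta).
Proof.
apply: measurableU; first apply: measurableU.
- exact: measurable_square.
- exact: measurable_band.
- exact: measurable_corner.
Qed.

Lemma mu2_Sset delta : 0 < delta < 1/4 ->
  mu2 (Sset delta) = (1/4 + (1/4 - delta) ^+ 2 / 2)%:E.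
Proof.
move=> /andP[d0 d1].
rewrite /Sset mu2U; last 3 first.
- by apply: measurableU; [exact: measurable_square | exact: measurable_band].
- exact: measurable_corner.
- rewrite -subset0 => -[a b] [[|]] /andP[/andP[? ?] _] /andP[/andP[? ?] _]; lra.
rewrite mu2U; last 3 first.
- exact: measurable_square.
- exact: measurable_band.
- by rewrite -subset0 => -[a b] [] /andP[/andP[? ?] _] /andP[/andP[? ?] _]; lra.
have -> : mu2 square = (1/8)%:E.
  by rewrite (mu2_parallelogram (h := 1/2)) => [|||x]; try congr (_%:E); lra.
have -> : mu2 band = (1/8)%:E.
  by rewrite (mu2_parallelogram (h := 1/2)) => [|||x]; try congr (_%:E); lra.
rewrite /corner mu2_triangle; last lra.
by rewrite -!EFinD; congr (_%:E); lra.
Qed.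

Lemma SsetP delta a b : Sset delta (a, b) ->
  [\/ [/\ 1/2 <= a, a < 3/4, 1/4 <= b & b < 3/4],
      [/\ 3/4 <= a, a < 1, 1 - a <= b & b < 3/2 - a] |
      [/\ 0 <= a, a < 1/4 - delta, 3/4 <= b & b < 3/4 + (1/4 - delta) - a]].
Proof.
by case=> [[|]|] /andP[/andP[? ?] /andP[? ?]]; [constructor 1 | constructor 2 | constructor 3].
Qed.

Ltac case_S H := case/SsetP: H => -[? ? ? ?].

Lemma Sset_bounds delta a b : 0 < delta -> Sset delta (a, b) ->
  [/\ 0 <= a, a < 1, 0 <= b & b < 1].
Proof. by move=> d0 /SsetP[] [] *; split; lra. Qed.

Lemma Sset_sub_unit_sq delta : 0 < delta -> Sset delta `<=` unit_sq.
Proof. by move=> d0 [a b] /(Sset_bounds d0)[*]; split; apply/andP; split. Qed.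

Lemma Sset_fst_lt_half delta a b : Sset delta (a, b) -> a < 1/2 ->
  [/\ 0 <= a, a < 1/4 - delta, 3/4 <= b & b < 3/4 + (1/4 - delta) - a].
Proof. by case/SsetP=> -[] *; [lra | lra | split]. Qed.

Lemma Sset_fst_ge_half delta a b : 0 < delta -> Sset delta (a, b) -> 1/2 <= a ->
  [/\ 1/2 <= a, a < 3/4, 1/4 <= b & b < 3/4] \/
  [/\ 3/4 <= a, a < 1, 1 - a <= b & b < 3/2 - a].
Proof. by move=> d0 /SsetP[] [] *; [left; split | right; split | lra]. Qed.

Lemma Sset_second_diff_sum delta (p0 p1 p2 : R * R) : 0 < delta ->
  Sset delta p0 -> Sset delta p1 -> Sset delta p2 ->
  p0.1 + p2.1 - 2 * p1.1 \in [:: -1; 0; 1] ->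
  p0.2 + p2.2 - 2 * p1.2 \in [:: -1; 0; 1] ->
  let K := (p0.1 + p2.1 - 2 * p1.1) + (p0.2 + p2.2 - 2 * p1.2) in
  K = 0 \/ K <= -1.
Proof.
case: p0 p1 p2 => [a0 b0] [a1 b1] [a2 b2] /= d0 H0 H1 H2 k1 k2.
(* k1 = 1 puts the middle point in the corner (a1 < 1/2), while k2 = 1 keeps
   it out of the corner (b1 < 1/2). *)
apply: sum_unit_cases => // k.
- have [|? ? ? ?] := Sset_fst_lt_half H1 (_ : a1 < 1/2).
    by case: (Sset_bounds d0 H0) (Sset_bounds d0 H2) => _ ? _ _ [_ ? _ _]; lra.
  by case_S H0; case_S H2; lra.
- have /(Sset_fst_ge_half d0 H1) H1' : 1/2 <= a1.
    case: ltP => // /(Sset_fst_lt_half H1) [? ? ? ?].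
    by case: (Sset_bounds d0 H0) (Sset_bounds d0 H2) => _ _ _ ? [_ _ _ ?]; lra.
  by case: H1' => -[? ? ? ?]; case_S H0; case_S H2; lra.
Qed.

Lemma Sset_same_side delta (p0 p1 p2 : R * R) : 0 < delta ->
  Sset delta p0 -> Sset delta p1 -> Sset delta p2 ->
  p0.1 + p2.1 - 2 * p1.1 \in [:: -1; 0; 1] ->
  (p0.1 + p2.1 - 2 * p1.1) + (p0.2 + p2.2 - 2 * p1.2) = 0 ->
  `|(p2.1 + p2.2) - (p0.1 + p0.2)| <= delta ->
  (p0.1 < 1/2) = (p2.1 < 1/2).
Proof.
case: p0 p2 => [a0 b0] [a2 b2] /= d0 H0 H1 H2 k1 k sep.
wlog le02 : a0 b0 a2 b2 H0 H2 k1 k sep / a0 <= a2.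
  move=> sym; have [le02|lt20] := leP a0 a2; first exact: (sym a0 b0 a2 b2).
  apply: esym; apply: (sym a2 b2 a0 b0) => //; last exact: ltW.
  - by rewrite (addrC a2).
  - by lra.
  - by rewrite distrC.
have [lt0|] := ltP a0 (1/2); last by case: ltP => //; lra.
case: ltP => // ge2; exfalso.
have [? ? ? ?] := Sset_fst_lt_half H0 lt0.
move: sep k1; rewrite ler_norml !inE => /andP[? ?] /or3P[] /eqP k1.
all: by case: (Sset_fst_ge_half d0 H2 ge2) => -[? ? ? ?]; case_S H1; lra.
Qed.

Lemma Sset_progression delta (p0 p1 p2 : R * R) : 0 < delta ->
  Sset delta p0 -> Sset delta p1 -> Sset delta p2 ->
  p0.1 + p2.1 - 2 * p1.1 \in [:: -1; 0; 1] ->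
  p0.2 + p2.2 - 2 * p1.2 \in [:: -1; 0; 1] ->
  let d1 := (p2.1 - p0.1) / 2 in let d2 := (p2.2 - p0.2) / 2 in
  p0.1 + p0.2 + (p2.1 + p2.2) + 1/2 <= 2 * (p1.1 + p1.2) \/
  (p1.1 + p1.2 = p0.1 + p0.2 + (d1 + d2) /\
   (`|d1 + d2| <= delta / 2 ->
    d1 ^+ 2 <= (1 - brace p0.1) ^+ 2 + (1 - brace p2.1) ^+ 2
                 - 2 * (1 - brace p1.1) ^+ 2)).
Proof.
case: p0 p1 p2 => [a0 b0] [a1 b1] [a2 b2] /= d0 H0 H1 H2 k1 k2.
have /= [K0|Kneg] := Sset_second_diff_sum d0 H0 H1 H2 k1 k2; last by left; lra.
right; split=> [|small]; first lra.
have /= side : (a0 < 1/2) = (a2 < 1/2).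
  apply: Sset_same_side d0 H0 H1 H2 k1 K0 _ => /=.
  by move: small; rewrite !ler_norml => /andP[? ?]; apply/andP; split; lra.
have [? ? _ _] := Sset_bounds d0 H0; have [? ? _ _] := Sset_bounds d0 H1.
have [? ? _ _] := Sset_bounds d0 H2.
rewrite second_diff_sq; last by apply: brace_second_diff => //; apply/andP.
rewrite brace_diff_same_side // -subr_ge0.
by rewrite (_ : _ - _ = ((a2 - a0) / 2) ^+ 2) ?sqr_ge0 //; field.
Qed.

End good_set.

Theorem proposition3p3 (R : realType) (eps : R) (heps : 0 < eps) :
  exists S : set (R * R),
    measurable S /\ S `<=` unit_sq /\
    ((9 / 32 - eps)%:E <= mu2 S)%E /\
    forall theta alpha : R * R,
      S (tor theta) -> S (tor (tadd theta alpha)) ->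
      S (tor (tadd theta (tscale 2 alpha))) ->
      let t0 := theta in
      let t1 := tadd theta alpha in
      let t2 := tadd theta (tscale 2 alpha) in
      let d1 := ((tor t2).1 - (tor t0).1) / 2 in
      let d2 := ((tor t2).2 - (tor t0).2) / 2 in
      (2 * psi t1 >= psi t0 + psi t2 + 1 / 2) \/
      (psi t1 = psi t0 + (d1 + d2) /\
       (`|d1 + d2| <= eps / 1000 ->
        (1 - brace (proj1T t0)) ^+ 2 + (1 - brace (proj1T t2)) ^+ 2
          - 2 * (1 - brace (proj1T t1)) ^+ 2 >= d1 ^+ 2)).
Proof.
(* With delta = eps/500, |d1 + d2| <= eps/1000 means |psi t2 - psi t0| <= delta. *)
pose delta := eps / 500.
have d0 : 0 < delta by rewrite /delta; lra.
exists (Sset delta); split; first exact: measurable_Sset.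
split; first exact: Sset_sub_unit_sq.
split.
  have [eps_small|eps_big] := ltP eps (9/32).
    rewrite mu2_Sset /delta ?lee_fin; first nra.
    by apply/andP; split; lra.
  apply: le_trans (measure_ge0 (lebesgue_measure \x lebesgue_measure)%E _).
  by rewrite lee_fin; lra.
move=> theta alpha H0 H1 H2.
have := Sset_progression d0 H0 H1 H2
  (frac_second_diff theta.1 alpha.1) (frac_second_diff theta.2 alpha.2).
case=> [?|[? small]]; [by left | right; split => // hd].
by apply: small; rewrite /delta; lra.
Qed.
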